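(* Let $\mathcal{X}$ be a nonempty finite set and $k:\mathcal{X}\times\mathcal{X}\to\mathbb{R}_{\ge 0}$. Then $k$ is a strong kernel if and only if $k$ is induced by some hierarchy on $\mathcal{X}$.
   Context: A rooted tree is a finite tree $T$ with a distinguished root vertex $r$. For a vertex $v$, its parent $p(v)$ is the vertex following $v$ on the unique path from $v$ to $r$, with the convention $p(r)=r$. The ancestors of $v$ are the vertices on the path from $v$ to $r$ (including $v$ and $r$); the depth of $v$ is the number of edges on this path. The lowest common ancestor $\mathrm{LCA}(u,v)$ is the unique vertex of maximum depth that is an ancestor of both $u$ and $v$. A hierarchy on a set $\mathcal{X}$ is a pair $(T,w)$ where $T$ is a rooted tree whose set of leaves is exactly $\mathcal{X}$, and $w:V(T)\to\mathbb{R}_{\ge 0}$ satisfies $w(v)\ge w(p(v))$ for all $v\in V(T)$. The kernel induced by $(T,w)$ is $k(x,y)=w(\mathrm{LCA}(x,y))$ for $x,y\in\mathcal{X}$. A strong kernel on a set $\mathcal{X}$ is a symmetric function $k:\mathcal{X}\times\mathcal{X}\to\mathbb{R}_{\ge 0}$ such that $k(x,y)\ge\min\{k(x,z),k(z,y)\}$ for all $x,y,z\in\mathcal{X}$. *)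

From HB Require Import structures.
From mathcomp Require Import all_boot all_order all_algebra.
Set Implicit Arguments. Unset Strict Implicit. Unset Printing Implicit Defensive.
Import Order.TTheory GRing.Theory Num.Theory.
Local Open Scope ring_scope.

(* A rooted tree on a finite vertex type V is given by a parent map p and a
   root r with p r = r, such that every vertex reaches r by iterating p.
   (This forces acyclicity: the only vertex fixed by p is r.) *)
Definition rooted_tree (V : finType) (p : V -> V) (r : V) : Prop :=
  p r = r /\ forall v : V, exists n : nat, iter n p v = r.

Definition ancestor (V : finType) (p : V -> V) (a v : V) : Prop :=
  exists n : nat, iter n p v = a.

Definition depth_is (V : finType) (p : V -> V) (r v : V) (d : nat) : Prop :=
  iter d p v = r /\ forall m : nat, (m < d)%N -> iter m p v <> r.

Definition is_lca (V : finType) (p : V -> V) (r u v a : V) : Prop :=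
  ancestor p a u /\ ancestor p a v /\
  exists da : nat, depth_is p r a da /\
    forall b db, ancestor p b u -> ancestor p b v -> depth_is p r b db ->
      (db <= da)%N.

Definition is_leaf (V : finType) (p : V -> V) (v : V) : Prop :=
  forall u : V, u <> v -> p u <> v.

Definition induced_by_hierarchy (R : realFieldType) (X : finType)
    (k : X -> X -> R) : Prop :=
  exists (V : finType) (p : V -> V) (r : V) (leaf : X -> V) (w : V -> R),
    [/\ rooted_tree p r,
        injective leaf,
        (forall v : V, is_leaf p v <-> exists x : X, leaf x = v),
        (forall v : V, 0 <= w v /\ w (p v) <= w v)
      & forall (x y : X) (a : V), is_lca p r (leaf x) (leaf y) a ->
          k x y = w a].

Definition strong_kernel (R : realFieldType) (X : finType)
    (k : X -> X -> R) : Prop :=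
  (forall x y, k x y = k y x) /\ (forall x y, 0 <= k x y) /\
  (forall x y z, Num.min (k x z) (k z y) <= k x y).

From HB Require Import structures.
From mathcomp Require Import all_boot all_order all_algebra.
From mathcomp Require Import zify.
From Stdlib Require Import Classical.
Import Order.TTheory GRing.Theory Num.Theory.
Set Implicit Arguments. Unset Strict Implicit. Unset Printing Implicit Defensive.

(* If a, b, c are the LCAs of the leaf pairs {x,y}, {x,z}, {z,y}, then b or c
   is an ancestor of a, since the ancestors of any vertex form a chain; monotone
   weights then give k x y >= min (k x z) (k z y).
   Conversely, for a strong kernel the "balls" C_s(x) = {y | s <= k x y} with
   s <= k x x satisfy C_s(x) = C_s(y) whenever s <= k x y.  Listing the values
   t_0 < ... < t_(m-1) of k, the pairs (j, C_(t_j)(x)) form a tree under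
   (j, C_(t_j)(x)) |-> (j - 1, C_(t_(j-1))(x)), rooted at (0, X); hang the leaf x
   below (j, C_(t_j)(x)) with t_j = k x x and give level j the weight t_j.  The
   LCA of x and y is then the ball of the level j with t_j = k x y. *)

Lemma ex_max_bounded (P : nat -> Prop) (B : nat) :
  P 0%N -> (forall n, P n -> (n <= B)%N) ->
  exists n, P n /\ forall m, P m -> (m <= n)%N.
Proof.
elim: B => [|B IH] P0 PB.
  by exists 0%N; split => // m /PB; rewrite leqn0 => /eqP ->.
have [PB1|nPB1] := classic (P B.+1); first by exists B.+1; split => // m /PB.
apply: IH => // n Pn; have := PB n Pn; rewrite leq_eqVlt => /orP[/eqP En|//].
by rewrite En in Pn.
Qed.

Lemma ancestor_trans (V : finType) (p : V -> V) a b c :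
  ancestor p a b -> ancestor p b c -> ancestor p a c.
Proof. by move=> [i <-] [j <-]; exists (i + j)%N; rewrite iterD. Qed.

Lemma ancestor_le_weight (R : realFieldType) (V : finType) (p : V -> V)
    (w : V -> R) a b :
  (forall v, w (p v) <= w v)%R -> ancestor p a b -> (w a <= w b)%R.
Proof. by move=> hw [n <-]; elim: n => //= n IH; apply: le_trans (hw _) IH. Qed.

Lemma depth_unique (V : finType) (p : V -> V) r v d d' :
  depth_is p r v d -> depth_is p r v d' -> d = d'.
Proof.
move=> [vd mind] [vd' mind']; case: (ltngtP d d') => // lt_dd'.
- by case: (mind' _ lt_dd').
- by case: (mind _ lt_dd').
Qed.

Lemma is_lca_sym (V : finType) (p : V -> V) r u v a :
  is_lca p r u v a -> is_lca p r v u a.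
Proof.
move=> [au [av [da [Da maxa]]]]; split=> //; split=> //.
by exists da; split=> // b db bv bu; apply: maxa.
Qed.

Section RootedTree.
Variables (V : finType) (p : V -> V) (r : V).
Hypothesis tree : rooted_tree p r.

Lemma depth_exists v : exists d, depth_is p r v d.
Proof.
have [n0 vn0] := tree.2 v; have ex_n : exists n, iter n p v == r by exists n0; apply/eqP.
case: (ex_minnP ex_n) => d /eqP vd mind; exists d; split => // n lt_nd /eqP /mind.
by rewrite leqNgt lt_nd.
Qed.

Lemma depth_iter v d n : depth_is p r v d -> depth_is p r (iter n p v) (d - n).
Proof.
move=> [vd mind]; split=> [|m lt_m]; rewrite -iterD; last by apply: mind; lia.
case: (leqP n d) => [le_nd|lt_dn]; first by rewrite subnK.
have -> : (d - n + n = n - d + d)%N by lia.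
by rewrite iterD vd iter_fix // tree.1.
Qed.

Lemma ancestor_depth a v da dv :
  ancestor p a v -> depth_is p r a da -> depth_is p r v dv ->
  exists2 n, iter n p v = a & da = (dv - n)%N.
Proof.
move=> [n an] Da Dv; exists n => //.
by apply: depth_unique Da _; rewrite -an; apply: depth_iter.
Qed.

Lemma ancestor_depth_le a v da dv :
  ancestor p a v -> depth_is p r a da -> depth_is p r v dv -> (da <= dv)%N.
Proof. by move=> av Da Dv; have [n _ ->] := ancestor_depth av Da Dv; apply: leq_subr. Qed.

Lemma ancestor_of_depth_le v a b da db :
  ancestor p a v -> ancestor p b v -> depth_is p r a da -> depth_is p r b db ->
  (da <= db)%N -> ancestor p a b.
Proof.
move=> av bv Da Db le_ab; have [dv Dv] := depth_exists v.
have [i ai Ei] := ancestor_depth av Da Dv; have [j bj Ej] := ancestor_depth bv Db Dv.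
case: (leqP j i) => [le_ji|lt_ij].
  by exists (i - j)%N; rewrite -ai -bj -iterD subnK.
have [ar _] : depth_is p r a 0 by rewrite -ai -(_ : dv - i = 0)%N; [apply: depth_iter | lia].
by move: ar => /= ->; apply: tree.2.
Qed.

Lemma lca_exists u v : exists a, is_lca p r u v a.
Proof.
have [du Du] := depth_exists u.
pose P d := exists b, [/\ ancestor p b u, ancestor p b v & depth_is p r b d].
have P0 : P 0%N by exists r; split; [apply: tree.2 | apply: tree.2 | split].
have [d [[a [au av Da]] maxd]] : exists d, P d /\ forall d', P d' -> (d' <= d)%N.
  by apply: (ex_max_bounded P0) => d [b [bu _ Db]]; apply: ancestor_depth_le bu Db Du.
by exists a; split=> //; split=> //; exists d; split => // b db bu bv Db; apply: maxd; exists b.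
Qed.

Lemma lca_ancestor_or u v z a b c :
  is_lca p r u v a -> is_lca p r u z b -> is_lca p r z v c ->
  ancestor p b a \/ ancestor p c a.
Proof.
move=> [au [av [da [Da maxa]]]] [bu [bz [db [Db _]]]] [cz [cv [dc [Dc maxc]]]].
have [le_ba|lt_ab] := leqP db da; first by left; apply: ancestor_of_depth_le bu au Db Da le_ba.
have ab := ancestor_of_depth_le au bu Da Db (ltnW lt_ab).
have le_ac := maxc _ _ (ancestor_trans ab bz) av Da.
have [le_cb|lt_bc] := leqP dc db.
  have cu := ancestor_trans (ancestor_of_depth_le cz bz Dc Db le_cb) bu.
  by right; apply: ancestor_of_depth_le cv av Dc Da (maxa _ _ cu cv Dc).
have bv := ancestor_trans (ancestor_of_depth_le bz cz Db Dc (ltnW lt_bc)) cv.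
by have := maxa _ _ bu bv Db; rewrite leqNgt lt_ab.
Qed.

End RootedTree.

Lemma hierarchy_strong_kernel (R : realFieldType) (X : finType) (k : X -> X -> R) :
  induced_by_hierarchy k -> strong_kernel k.
Proof.
move=> [V [p [r [leaf [w [tree _ _ hw kw]]]]]].
have lca_leaf x y : exists a, is_lca p r (leaf x) (leaf y) a by apply: lca_exists.
split; [|split] => [x y|x y|x y z].
- by have [a xya] := lca_leaf x y; rewrite (kw _ _ _ xya) (kw _ _ _ (is_lca_sym xya)).
- by have [a xya] := lca_leaf x y; rewrite (kw _ _ _ xya); case: (hw a).
have [a xya] := lca_leaf x y; have [b xzb] := lca_leaf x z; have [c zyc] := lca_leaf z y.
rewrite (kw _ _ _ xya) (kw _ _ _ xzb) (kw _ _ _ zyc) ge_min.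
have mono v : (w (p v) <= w v)%R by case: (hw v).
by case: (lca_ancestor_or tree xya xzb zyc) => /(ancestor_le_weight mono) ->; rewrite ?orbT.
Qed.

Definition kernel_values (R : realFieldType) (X : finType) (k : X -> X -> R) : seq R :=
  sort <=%R (undup [seq k x y | x <- enum X, y <- enum X]).

Definition kvalue (R : realFieldType) (X : finType) (k : X -> X -> R) (j : nat) : R :=
  nth 0%R (kernel_values k) j.

(* [klevel k] is [k] transported along the order isomorphism between the value
   set of [k] and an initial segment of [nat]. *)
Definition klevel (R : realFieldType) (X : finType) (k : X -> X -> R) (x y : X) : nat :=
  index (k x y) (kernel_values k).

Definition cluster (R : realFieldType) (X : finType) (k : X -> X -> R) (j : nat) (x : X) :
  {set X} := [set y | (j <= klevel k x y)%N].

(* Levels range over ['I_m.+1] rather than ['I_m] so that [inord] applies. *)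
Definition is_cluster (R : realFieldType) (X : finType) (k : X -> X -> R)
    (c : 'I_(size (kernel_values k)).+1 * {set X}) : bool :=
  [exists x, (c.1 <= klevel k x x)%N && (c.2 == cluster k c.1 x)].
Arguments is_cluster {R X} k c.

Definition cluster_vertex (R : realFieldType) (X : finType) (k : X -> X -> R) :=
  {c | is_cluster k c}.

Section StrongKernelHierarchy.
Variables (R : realFieldType) (X : finType) (k : X -> X -> R) (x0 : X).
Hypothesis strong : strong_kernel k.
Local Open Scope ring_scope.

Local Notation m := (size (kernel_values k)).
Local Notation t := (kvalue k).
Local Notation lv := (klevel k).

Lemma sorted_kernel_values : sorted <%R (kernel_values k).
Proof.
by rewrite lt_sorted_uniq_le sort_uniq undup_uniq sort_sorted //; apply: le_total.
Qed.

Lemma mem_kernel_values x y : k x y \in kernel_values k.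
Proof. by rewrite mem_sort mem_undup; apply/allpairsP; exists (x, y); rewrite !mem_enum. Qed.

Lemma klevel_lt x y : (lv x y < m)%N.
Proof. by rewrite index_mem mem_kernel_values. Qed.

Lemma kvalue_klevel x y : t (lv x y) = k x y.
Proof. by rewrite /kvalue nth_index ?mem_kernel_values. Qed.

Lemma kvalue_le i j : (i <= j < m)%N -> t i <= t j.
Proof.
case/andP=> le_ij lt_jm.
by rewrite (lt_sorted_leq_nth 0 sorted_kernel_values) // inE (leq_ltn_trans le_ij).
Qed.

Lemma kvalue_ge0 j : (j < m)%N -> 0 <= t j.
Proof.
move=> lt_jm; have : t j \in kernel_values k by rewrite mem_nth.
by rewrite mem_sort mem_undup => /allpairsP [[x y] [_ _ ->]]; case: strong => _ [].
Qed.

Lemma leq_klevel j x y : (j < m)%N -> (j <= lv x y)%N = (t j <= k x y).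
Proof.
move=> lt_jm; rewrite -kvalue_klevel.
by rewrite (lt_sorted_leq_nth 0 sorted_kernel_values) // inE klevel_lt.
Qed.

Lemma klevel_sym x y : lv x y = lv y x.
Proof. by rewrite /klevel; case: strong => ->. Qed.

Lemma klevel_ultra j x y z : (j <= lv x z)%N -> (j <= lv z y)%N -> (j <= lv x y)%N.
Proof.
move=> le_xz le_zy; have lt_jm := leq_ltn_trans le_xz (klevel_lt x z).
move: le_xz le_zy; rewrite !leq_klevel // => le_xz le_zy.
by case: strong => _ [_ ultra]; apply: le_trans (ultra x y z); rewrite le_min le_xz.
Qed.

Lemma klevel_le_diag x y : (lv x y <= lv x x)%N.
Proof. by apply: (klevel_ultra (z := y)); rewrite // klevel_sym. Qed.

Lemma cluster_eq j x y : (j <= lv x y)%N -> cluster k j x = cluster k j y.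
Proof.
move=> le_xy; apply/setP => z; rewrite !inE; apply/idP/idP => le_z.
  by apply: klevel_ultra le_z; rewrite klevel_sym.
exact: klevel_ultra le_xy le_z.
Qed.

Lemma is_cluster_inord j x : (j <= lv x x)%N -> is_cluster k (inord j, cluster k j x).
Proof.
move=> le_jx; have lt_jm := leq_ltn_trans le_jx (klevel_lt x x).
by apply/existsP; exists x; rewrite /= inordK ?le_jx ?eqxx // ltnW.
Qed.

Definition root_cluster : cluster_vertex k :=
  exist (is_cluster k) _ (is_cluster_inord (leq0n (lv x0 x0))).

Definition cluster_of j x : cluster_vertex k :=
  insubd root_cluster (inord j, cluster k j x).

Definition cluster_level (c : cluster_vertex k) : nat := (val c).1.

Lemma val_cluster_of j x : (j <= lv x x)%N ->
  val (cluster_of j x) = (inord j, cluster k j x).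
Proof. by move=> le_jx; rewrite insubdK //; apply: is_cluster_inord. Qed.

Lemma cluster_level_of j x : (j <= lv x x)%N -> cluster_level (cluster_of j x) = j.
Proof.
move=> le_jx; rewrite /cluster_level val_cluster_of //= inordK // ltnW //.
exact: leq_ltn_trans le_jx (klevel_lt x x).
Qed.

Lemma cluster_of_eq j x y : (j <= lv x y)%N -> cluster_of j x = cluster_of j y.
Proof. by move=> le_xy; rewrite /cluster_of (cluster_eq le_xy). Qed.

Lemma cluster_of_inj j x y : (j <= lv x x)%N -> (j <= lv y y)%N ->
  cluster_of j x = cluster_of j y -> (j <= lv x y)%N.
Proof.
move=> le_jx le_jy /(congr1 val); rewrite !val_cluster_of // => -[] /setP /(_ y).
by rewrite !inE le_jy => ->.
Qed.

Lemma root_cluster_of x : root_cluster = cluster_of 0 x.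
Proof.
rewrite (cluster_of_eq (y := x0) (leq0n _)); apply: val_inj.
by rewrite val_cluster_of.
Qed.

Lemma cluster_ofP c : exists j x, (j <= lv x x)%N /\ c = cluster_of j x.
Proof.
case: c => [[j S] cS]; have /existsP [x /andP [/= le_jx /eqP eS]] := cS.
by exists j, x; split=> //; apply: val_inj; rewrite val_cluster_of //= -eS inord_val.
Qed.

Definition vertex := (X + cluster_vertex k)%type.

Definition root : vertex := inr root_cluster.

(* Any point of a cluster represents it (lemma [cluster_eq]); [x0] is only a
   default for the never-empty [pick]. *)
Definition parent (v : vertex) : vertex :=
  match v with
  | inl x => inr (cluster_of (lv x x) x)
  | inr c => inr (cluster_of (cluster_level c).-1 (odflt x0 [pick y in (val c).2]))
  end.

Definition vertex_level (v : vertex) : nat :=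
  match v with inl x => lv x x | inr c => cluster_level c end.

Definition weight (v : vertex) : R := t (vertex_level v).

Lemma parent_cluster_of j x : (j <= lv x x)%N ->
  parent (inr (cluster_of j x)) = inr (cluster_of j.-1 x).
Proof.
move=> le_jx /=; rewrite cluster_level_of // val_cluster_of //=.
case: pickP => [y|/(_ x)]; rewrite inE ?le_jx // => le_jy; congr inr.
by apply: cluster_of_eq; rewrite klevel_sym (leq_trans (leq_pred j)).
Qed.

Lemma iter_parent_cluster_of j x n : (j <= lv x x)%N ->
  iter n parent (inr (cluster_of j x)) = inr (cluster_of (j - n) x).
Proof.
move=> le_jx; elim: n => [|n IHn]; first by rewrite subn0.
by rewrite iterS IHn parent_cluster_of ?subnS // (leq_trans (leq_subr n j)).
Qed.

Lemma iter_parent_leaf x n :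
  iter n.+1 parent (inl x) = inr (cluster_of (lv x x - n) x).
Proof. by rewrite iterSr iter_parent_cluster_of. Qed.

Lemma cluster_of_neq_root j x : (0 < j <= lv x x)%N -> inr (cluster_of j x) <> root.
Proof.
case/andP=> j_gt0 le_jx [] /(congr1 cluster_level).
by rewrite (root_cluster_of x) !cluster_level_of // => j0; rewrite j0 in j_gt0.
Qed.

Lemma cluster_tree : rooted_tree parent root.
Proof.
split; first by rewrite /root (root_cluster_of x0) parent_cluster_of.
case=> [x|c]; first by exists (lv x x).+1; rewrite iter_parent_leaf subnn -root_cluster_of.
have [j [x [le_jx ->]]] := cluster_ofP c.
by exists j; rewrite iter_parent_cluster_of // subnn -root_cluster_of.
Qed.

Lemma depth_cluster_of j x : (j <= lv x x)%N ->
  depth_is parent root (inr (cluster_of j x)) j.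
Proof.
move=> le_jx; split; first by rewrite iter_parent_cluster_of // subnn -root_cluster_of.
move=> n lt_nj; rewrite iter_parent_cluster_of //; apply: cluster_of_neq_root.
by rewrite subn_gt0 lt_nj (leq_trans (leq_subr n j)).
Qed.

Lemma depth_leaf x : depth_is parent root (inl x) (lv x x).+1.
Proof.
split; first by rewrite iter_parent_leaf subnn -root_cluster_of.
case=> [|n] // lt_nx; rewrite iter_parent_leaf; apply: cluster_of_neq_root.
by rewrite subn_gt0 -ltnS lt_nx leq_subr.
Qed.

Lemma ancestor_leaf a x : ancestor parent a (inl x) ->
  a = inl x \/ exists2 j, (j <= lv x x)%N & a = inr (cluster_of j x).
Proof.
case=> -[|n] <-; [by left | right].
by exists (lv x x - n)%N; rewrite ?leq_subr ?iter_parent_leaf.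
Qed.

Lemma ancestor_leaf_cluster_of j x : (j <= lv x x)%N ->
  ancestor parent (inr (cluster_of j x)) (inl x).
Proof. by move=> le_jx; exists (lv x x - j).+1; rewrite iter_parent_leaf subKn. Qed.

Lemma is_leaf_vertex v : is_leaf parent v <-> exists x, inl x = v.
Proof.
split; last by move=> [x <-] [u|u] _; rewrite /parent.
case: v => [x _|c leaf_c]; first by exists x.
have [j [x [le_jx ec]]] := cluster_ofP c; subst c; exfalso.
move: le_jx; rewrite leq_eqVlt => /orP[/eqP eq_jx|lt_jx].
  by apply: (leaf_c (inl x)) => //; rewrite eq_jx.
apply: (leaf_c (inr (cluster_of j.+1 x))); last by rewrite parent_cluster_of.
by move=> [] /(congr1 cluster_level); rewrite !cluster_level_of ?(ltnW lt_jx) //; lia.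
Qed.

Lemma vertex_level_lt v : (vertex_level v < m)%N.
Proof.
case: v => [x|c] /=; first exact: klevel_lt.
have [j [x [le_jx ->]]] := cluster_ofP c.
by rewrite cluster_level_of // (leq_ltn_trans le_jx (klevel_lt x x)).
Qed.

Lemma vertex_level_parent v : (vertex_level (parent v) <= vertex_level v)%N.
Proof.
case: v => [x|c]; first by rewrite /= cluster_level_of.
have [j [x [le_jx ->]]] := cluster_ofP c.
by rewrite parent_cluster_of //= !cluster_level_of ?leq_pred // (leq_trans (leq_pred j)).
Qed.

Lemma weight_parent v : 0 <= weight v /\ weight (parent v) <= weight v.
Proof.
split; first exact/kvalue_ge0/vertex_level_lt.
by apply: kvalue_le; rewrite vertex_level_parent vertex_level_lt.
Qed.

(* The cluster at level [lv x y] is a common ancestor of that depth, and a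
   common cluster ancestor has level at most [lv x y] by [cluster_of_inj]. *)
Lemma lca_leaf_weight x y a : is_lca parent root (inl x) (inl y) a -> k x y = weight a.
Proof.
move=> [ax [ay [da [Da maxa]]]].
have le_x := klevel_le_diag x y; have le_y : (lv x y <= lv y y)%N.
  by rewrite klevel_sym klevel_le_diag.
have le_lda : (lv x y <= da)%N.
  apply: maxa (ancestor_leaf_cluster_of le_x) _ (depth_cluster_of le_x).
  by rewrite (cluster_of_eq (leqnn _)); apply: ancestor_leaf_cluster_of.
case: (ancestor_leaf ax) => [exa|[i le_ix exa]]; subst a.
  case: (ancestor_leaf ay) => [[<-]|[? _ //]].
  by rewrite /weight kvalue_klevel.
case: (ancestor_leaf ay) => [//|[i' le_iy [eci]]].
have ei : i = i' by rewrite -(cluster_level_of le_ix) eci cluster_level_of.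
subst i'; have le_il := cluster_of_inj le_ix le_iy eci.
have eda := depth_unique Da (depth_cluster_of le_ix); subst da.
have -> : i = lv x y by apply/anti_leq; rewrite le_il le_lda.
by rewrite /weight /= cluster_level_of // kvalue_klevel.
Qed.

Lemma strong_kernel_hierarchy : induced_by_hierarchy k.
Proof.
exists vertex, parent, root, inl, weight; split.
- exact: cluster_tree.
- by move=> x y [].
- exact: is_leaf_vertex.
- exact: weight_parent.
- exact: lca_leaf_weight.
Qed.

End StrongKernelHierarchy.

Theorem theorem1 (R : realFieldType) (X : finType) (hX : (0 < #|X|)%N)
    (k : X -> X -> R) (hk : forall x y : X, (0 <= k x y)%R) :
  strong_kernel k <-> induced_by_hierarchy k.
Proof.
split; last exact: hierarchy_strong_kernel.
by case/card_gt0P: hX => x0 _; apply: strong_kernel_hierarchy.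
Qed.
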